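(* Let $\mathcal{G}_n(\mathcal{X},\mathcal{Y},d,Q)$ be a position-optimization game (as defined in the context) and let $c>0$ satisfy $n\ge\frac1c>\frac{2}{p_0}$. Then in every pure Nash equilibrium $\bm{x}$, for every $x\in\mathcal{X}^*$, $k_{\bm{x}}(x)\ge\lfloor cn\rfloor$.
   Context: Position-optimization game: $\mathcal{X}$ is an arbitrary set of positions, $\mathcal{Y}$ an arbitrary set of targets, $d:\mathcal{X}\times\mathcal{Y}\to[0,\infty]$ a proximity function. For $y\in\mathcal{Y}$ let $x^*(y)=\arg\min_{x\in\mathcal{X}} d(x,y)$, and $\mathcal{X}^*=\bigcup_{y\in\mathcal{Y}}x^*(y)$ (pseudo-targets). $Q$ is a probability distribution on $\mathcal{Y}$ with $Q(\{y:|x^*(y)|>1\})=0$ and $|\mathcal{X}^*|<\infty$. For $x\in\mathcal{X}^*$ let $P(x)=Q(\{y: x^*(y)=\{x\}\})$ and $p_0=\min_{x\in\mathcal{X}^*}P(x)$. In the game $\mathcal{G}_n(\mathcal{X},\mathcal{Y},d,Q)$, players $i\in[n]$ choose positions $x_i\in\mathcal{X}$, $\bm{x}=(x_1,\dots,x_n)$; with $X_{\min}(\bm{x},y)=\arg\min_{x_i\in\bm{x}} d(x_i,y)$, player $i$'s utility is $u_i(x_i,\bm{x}_{-i})=\mathbb{E}_{y\sim Q}\big[\mathbb{1}[x_i\in X_{\min}(\bm{x},y)]/|X_{\min}(\bm{x},y)|\big]$. A pure Nash equilibrium is $\bm{x}$ with $u_i(x_i',\bm{x}_{-i})\le u_i(x_i,\bm{x}_{-i})$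 for all $i$, $x_i'\in\mathcal{X}$. $k_{\bm{x}}(x)$ is the number of players at position $x$. *)

From HB Require Import structures.
From mathcomp Require Import all_boot all_order all_algebra.
From mathcomp Require Import all_classical all_reals all_analysis measurable_realfun.
Set Implicit Arguments. Unset Strict Implicit. Unset Printing Implicit Defensive.
Import Order.TTheory GRing.Theory Num.Theory.
Local Open Scope classical_set_scope.
Local Open Scope ring_scope.

Section Game.
Context {R : realType} {X : Type} {dY : measure_display} {Y : measurableType dY}.
Variable d : X -> Y -> \bar R.

Definition xstar (y : Y) : set X := [set x | forall x', (d x y <= d x' y)%E].

Definition Xstar : set X := [set x | exists y, xstar y x].

Definition multi_set : set Y :=
  [set y | exists x1 x2, x1 <> x2 /\ xstar y x1 /\ xstar y x2].

Definition uniq_set (x : X) : set Y := [set y | xstar y = [set x]].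

Definition Pmass (Q : probability Y R) (x : X) : R := fine (Q (uniq_set x)).

(* p_0 = min_{x in X^*} P(x) (X^* is finite, so the infimum is the minimum) *)
Definition p0 (Q : probability Y R) : R := inf [set Pmass Q x | x in Xstar].

Definition Xmin (n : nat) (xs : 'I_n -> X) (y : Y) : {set 'I_n} :=
  [set i | `[< forall j, (d (xs i) y <= d (xs j) y)%E >]].

Definition payoff (n : nat) (xs : 'I_n -> X) (i : 'I_n) (y : Y) : \bar R :=
  ((i \in Xmin xs y)%:R / #|Xmin xs y|%:R)%:E.

Definition utility (Q : probability Y R) (n : nat) (xs : 'I_n -> X) (i : 'I_n)
  : \bar R :=
  (\int[Q]_y payoff xs i y)%E.

Definition deviate (n : nat) (xs : 'I_n -> X) (i : 'I_n) (x' : X) : 'I_n -> X :=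
  fun j => if j == i then x' else xs j.

Definition is_pure_NE (Q : probability Y R) (n : nat) (xs : 'I_n -> X) : Prop :=
  forall (i : 'I_n) (x' : X),
    (utility Q (deviate xs i x') i <= utility Q xs i)%E.

End Game.

Definition kcount {X : Type} (n : nat) (xs : 'I_n -> X) (x : X) : nat :=
  #|[set i : 'I_n | `[< xs i = x >]]|.

From HB Require Import structures.
From mathcomp Require Import all_boot all_order all_algebra.
From mathcomp Require Import all_classical all_reals all_analysis measurable_realfun.
From mathcomp Require Import lra.
Import Order.TTheory GRing.Theory Num.Theory.
Local Open Scope classical_set_scope.
Local Open Scope ring_scope.

(* Every player may move to a pseudo-target x.  On each target whose unique
   optimal position is x, the mover is then one of at most k + 1 closest
   players, k = k_x(x), so its utility after moving is at least P(x) / (k + 1).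
   In a pure Nash equilibrium every player's utility is at least this much,
   while the utilities of all n players sum to at most 1; hence
   n P(x) <= k + 1.  As P(x) >= p_0 > 2c > c, this gives c n < k + 1. *)

Section PositionGame.
Context {R : realType} {X : Type} {dY : measure_display}.
Context {Y : measurableType dY}.
Context {d : X -> Y -> \bar R}.

Lemma uniq_set_lt x x' y : uniq_set d x y -> x' <> x -> (d x y < d x' y)%E.
Proof.
move=> Ux neq_x'x; have x_opt : xstar d y x by rewrite Ux.
rewrite ltNge; apply/negP => le_x'x; apply: neq_x'x.
have : xstar d y x' by move=> z; apply: le_trans le_x'x (x_opt z).
by rewrite Ux.
Qed.

Context {n : nat}.
Implicit Types (xs : 'I_n -> X) (i : 'I_n).

Lemma mem_Xmin_deviate_uniq xs i x y :
  uniq_set d x y -> i \in Xmin d (deviate xs i x) y.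
Proof.
move=> Ux; have x_opt : xstar d y x by rewrite Ux.
by rewrite inE; apply/asboolP => j; rewrite /deviate eqxx; apply: x_opt.
Qed.

Lemma kcountE xs x : kcount xs x = #|[set j | `[< xs j = x >]]%SET|.
Proof. by apply: eq_card => j; rewrite inE /in_mem /= /in_set asboolb. Qed.

Lemma card_Xmin_deviate_uniq xs i x y :
  uniq_set d x y -> (#|Xmin d (deviate xs i x) y| <= (kcount xs x).+1)%N.
Proof.
move=> Ux; rewrite kcountE -add1n.
apply: (@leq_trans #|i |: [set j | `[< xs j = x >]]%SET|); last first.
  by rewrite cardsU1 leq_add2r leq_b1.
apply: subset_leq_card; apply/fintype.subsetP => j; rewrite !inE.
case: eqVneq => [//|neq_ji] /asboolP /(_ i).
rewrite /deviate eqxx (negbTE neq_ji) => le_j.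
apply/asboolP; apply: contra_leP le_j => neq_xjx.
exact: uniq_set_lt.
Qed.

Lemma payoff_ge0 xs i y : (0 <= payoff d xs i y)%E.
Proof. by rewrite lee_fin divr_ge0. Qed.

Lemma sum_payoff_le1 xs y : (\sum_i payoff d xs i y <= 1)%E.
Proof.
rewrite sumEFin lee_fin -mulr_suml.
have -> : \sum_i ((i \in Xmin d xs y)%:R : R) = \sum_(i in Xmin d xs y) 1.
  by rewrite [RHS]big_mkcond; apply: eq_bigr => j _; case: (j \in _).
rewrite sumr_const.
(* For n = 0 there is no closest player and 0 / 0 = 0. *)
have [-> | card_gt0] := posnP #|Xmin d xs y|; first by rewrite mul0r.
by rewrite divff // pnatr_eq0 -lt0n.
Qed.

Lemma payoff_deviate_uniq_ge xs i x y : uniq_set d x y ->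
  (((kcount xs x).+1%:R)^-1%:E <= payoff d (deviate xs i x) i y)%E.
Proof.
move=> Ux; have card_gt0 : (0 < #|Xmin d (deviate xs i x) y|)%N.
  by apply/card_gt0P; exists i; apply: mem_Xmin_deviate_uniq.
rewrite /payoff mem_Xmin_deviate_uniq // mul1r lee_fin lef_pV2 ?posrE ?ltr0n //.
by rewrite ler_nat card_Xmin_deviate_uniq.
Qed.

Context {Q : probability Y R}.

Lemma p0_le_Pmass x : Xstar d x -> p0 d Q <= Pmass d Q x.
Proof.
move=> Xx; apply: ge_inf; last by exists x.
by exists 0 => _ [z _ <-]; rewrite fine_ge0.
Qed.

Hypothesis payoff_measurable :
  forall xs i, measurable_fun setT (payoff d xs i).

Lemma sum_utility_le1 xs : (\sum_i utility d Q xs i <= 1)%E.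
Proof.
rewrite /utility -ge0_integral_sum //; last by move=> i y _; exact: payoff_ge0.
apply: (@le_trans _ _ (\int[Q]_y cst 1%E y)%E).
  apply: ge0_le_integral => //.
  - by move=> y _; apply: sume_ge0 => i _; exact: payoff_ge0.
  - exact: emeasurable_sum.
  - by move=> y _; exact: sum_payoff_le1.
by rewrite integral_cst // mul1e probability_le1.
Qed.

Lemma utility_deviate_uniq_ge xs i x : measurable (uniq_set d x) ->
  ((((kcount xs x).+1%:R)^-1 * Pmass d Q x)%:E
     <= utility d Q (deviate xs i x) i)%E.
Proof.
move=> mUx; rewrite EFinM /Pmass fineK ?fin_num_measure // -integral_cst //.
apply: le_trans (ge0_subset_integral _ mUx measurableT _ _ (@subsetT _ _)).
- apply: ge0_le_integral => //.
  - by move=> y _; rewrite lee_fin invr_ge0.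
  - exact: measurable_funS (payoff_measurable _ _).
  - by move=> y; exact: payoff_deviate_uniq_ge.
- exact: payoff_measurable.
- by move=> y _; exact: payoff_ge0.
Qed.

Lemma pure_NE_Pmass_le xs x : is_pure_NE d Q xs -> measurable (uniq_set d x) ->
  Pmass d Q x * n%:R <= (kcount xs x).+1%:R.
Proof.
move=> NE mUx; set share := ((kcount xs x).+1%:R)^-1 * Pmass d Q x.
have share_le j : (share%:E <= utility d Q xs j)%E.
  exact: le_trans (utility_deviate_uniq_ge xs j x mUx) (NE j x).
have : (\sum_(j < n) share%:E <= 1)%E.
  exact: le_trans (lee_sum _ (fun j _ => share_le j)) (sum_utility_le1 xs).
rewrite sumEFin sumr_const card_ord lee_fin => share_n_le1.
by rewrite -[leRHS]mulr1 -ler_pdivrMl ?ltr0Sn // mulrA mulr_natr.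
Qed.
End PositionGame.

Theorem lemma5 (R : realType) (X : Type) (dY : measure_display)
  (Y : measurableType dY) (d : X -> Y -> \bar R) (Q : probability Y R)
  (n : nat) (c : R) :
  (forall x y, (0 <= d x y)%E) ->
  (forall (xs : 'I_n -> X) (i : 'I_n), measurable_fun setT (payoff d xs i)) ->
  measurable (multi_set d) ->
  (forall x, Xstar d x -> measurable (uniq_set d x)) ->
  Q (multi_set d) = 0%E ->
  finite_set (Xstar d) ->
  0 < c ->
  c^-1 <= n%:R ->
  0 < p0 d Q ->
  2 / p0 d Q < c^-1 ->
  forall xs : 'I_n -> X, is_pure_NE d Q xs ->
  forall x : X, Xstar d x ->
    Num.floor (c * n%:R) <= (kcount xs x)%:Z.
Proof.
(* Neither ties nor the finiteness of X^* matter: payoffs sum to at most 1 at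
   every target in any case. *)
move=> _ payoff_measurable _ uniq_set_measurable _ _ c_gt0 c_le_n p0_gt0 p0_c.
move=> xs NE x Xx.
have n_gt0 : 0 < n%:R :> R by apply: lt_le_trans c_le_n; rewrite invr_gt0.
have c_lt_Pmass : c < Pmass d Q x.
  apply: lt_le_trans (p0_le_Pmass x Xx).
  by move: p0_c; rewrite ltr_pdivrMr // mulrC ltr_pdivlMr //; lra.
have Pmass_n_le := pure_NE_Pmass_le payoff_measurable xs x NE
  (uniq_set_measurable x Xx).
rewrite -ltzD1 floor_lt_int -PoszD addn1 pmulrn.
by apply: lt_le_trans Pmass_n_le; rewrite ltr_pM2r.
Qed.
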